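(* Let $e,m_->0$. There exist constants $0<C_1\le C_1'$ and $0<C_2\le C_2'$, depending only on $e,m_-$ (in particular independent of $k,\xi$), such that for every $k\in\mathbb{Z}\setminus\{0\}$, $\xi\in\mathbb{R}$ and every solution $B(t)=(B_1(t),B_2(t))^\top\in\mathbb{C}^2$ of $\frac{d}{dt}B=L_-(t)B$ on $[0,\infty)$, the functional $$\mathcal{E}_-(t)=\sqrt{\tfrac{p_2}{m_2}}|B_1|^2+2\frac{h_2}{\sqrt{m_2p_2}}\Re(B_1\bar B_2)+\sqrt{\tfrac{m_2}{p_2}}|B_2|^2$$ satisfies, for all $t\ge0$, $$C_1\mathcal{E}_-(0)\le\mathcal{E}_-(t)\le C_1'\mathcal{E}_-(0),\qquad C_2|B(0)|\le|B(t)|\le C_2'|B(0)|.$$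
   Context: For fixed $k\in\mathbb{Z}\setminus\{0\}$, $\xi\in\mathbb{R}$ let $\alpha(t)=k^2+(\xi-kt)^2$, so $\partial_t\alpha=-2k(\xi-kt)$. Define $h_2(t)=\frac14\alpha^{-1}\partial_t\alpha$, $m_2(t)=\frac{1}{\sqrt{m_-}}\alpha^{1/2}$, $p_2(t)=\frac{4\pi e^2}{\sqrt{m_-}\alpha^{1/2}}+\frac{2k^2\sqrt{m_-}}{\alpha^{3/2}}+\frac{1}{\sqrt{m_-}}\alpha^{1/2}$, and $$L_-(t)=\begin{pmatrix}-h_2(t) & -m_2(t)\\ p_2(t) & h_2(t)\end{pmatrix}.$$ (This is the Fourier-side symmetrized form, in the sheared coordinates $X=x-yt$, $Y=y$, of the linearized electron Euler–Poisson system around the Couette flow.) *)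

From Stdlib Require Import Reals Lra.
From Coquelicot Require Import Coquelicot.
Open Scope R_scope.

(* Parameters: e (electron charge), mm = m_- (mass), k (as a real), xi. *)
Definition alpha (k xi t : R) : R := k ^ 2 + (xi - k * t) ^ 2.
Definition dalpha (k xi t : R) : R := - 2 * k * (xi - k * t).

Definition h2 (k xi t : R) : R := / 4 * / alpha k xi t * dalpha k xi t.
Definition m2 (mm k xi t : R) : R := / sqrt mm * sqrt (alpha k xi t).
Definition p2 (e mm k xi t : R) : R :=
  4 * PI * e ^ 2 / (sqrt mm * sqrt (alpha k xi t))
  + 2 * k ^ 2 * sqrt mm / (alpha k xi t * sqrt (alpha k xi t))
  + / sqrt mm * sqrt (alpha k xi t).

Definition is_solution (e mm k xi : R) (B1 B2 : R -> C) : Prop :=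
  (forall t, 0 <= t -> filterlim B1 (at_right t) (locally (B1 t))
                     /\ filterlim B2 (at_right t) (locally (B2 t))) /\
  (forall t, 0 < t ->
     is_derive B1 t (- (RtoC (h2 k xi t) * B1 t) - RtoC (m2 mm k xi t) * B2 t)%C /\
     is_derive B2 t (RtoC (p2 e mm k xi t) * B1 t + RtoC (h2 k xi t) * B2 t)%C).

Definition Eminus (e mm k xi : R) (B1 B2 : R -> C) (t : R) : R :=
  let h := h2 k xi t in let m := m2 mm k xi t in let p := p2 e mm k xi t in
  sqrt (p / m) * (Cmod (B1 t)) ^ 2
  + 2 * (h / sqrt (m * p)) * Re (B1 t * Cconj (B2 t))%C
  + sqrt (m / p) * (Cmod (B2 t)) ^ 2.

Definition normB (B1 B2 : R -> C) (t : R) : R :=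
  sqrt ((Cmod (B1 t)) ^ 2 + (Cmod (B2 t)) ^ 2).

From Stdlib Require Import Reals ZArith Lra Lia.
From Coquelicot Require Import Coquelicot.
Open Scope R_scope.

(* The weights of E_- are a = sqrt (p2/m2), b = h2 / sqrt (m2 p2) and c = sqrt (m2/p2) = 1/a,
   and they satisfy a h2 = b p2 and a m2 = c p2.  These relations make the terms coming from the
   equation cancel in dE_-/dt, which is therefore the same quadratic form with a, b, c replaced
   by their time derivatives.  As a c = 1 and |b| <= 1/2, E_- is comparable to
   a |B1|^2 + c |B2|^2, while |a'| <= kappa q a, |c'| <= kappa q c and |b'| <= sqrt(m_-) q with
   q = k^2/alpha; hence |dE_-/dt| <= D q E_-.  Since q is the derivative of atan (t - xi/k), its
   integral over [0, oo) is at most pi, and Gronwall's inequality bounds E_-(t)/E_-(0) between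
   exp (-D pi) and exp (D pi).  Finally 1 <= a <= 1 + 4 pi e^2 + 2 m_-, so E_- is also
   comparable to |B|^2. *)

Definition qform (a b c x y : R) : R := a * x ^ 2 + 2 * b * (x * y) + c * y ^ 2.

Definition cform (a b c : R) (z w : C) : R :=
  a * Cmod z ^ 2 + 2 * b * Re (z * Cconj w) + c * Cmod w ^ 2.

Lemma cform_qform (a b c : R) (z w : C) :
  cform a b c z w = qform a b c (Re z) (Re w) + qform a b c (Im z) (Im w).
Proof.
  unfold cform, qform. rewrite !Cmod2_alt. destruct z, w. simpl. ring.
Qed.

Lemma two_mul_le_weighted (a c x y : R) : 0 < a -> a * c = 1 ->
  2 * Rabs (x * y) <= a * x ^ 2 + c * y ^ 2.
Proof.
  intros ha hac.
  (* a (x -+ c y)^2 = a x^2 -+ 2 x y + c y^2 because a c = 1 *)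
  assert (sq : forall u, 0 <= a * (x - u * c * y) ^ 2)
    by (intros u; pose proof (pow2_ge_0 (x - u * c * y)); nra).
  assert (expand : forall u, u * u = 1 ->
            a * (x - u * c * y) ^ 2 = a * x ^ 2 - 2 * u * (x * y) + c * y ^ 2).
  { intros u hu. replace (a * (x - u * c * y) ^ 2) with
      (a * x ^ 2 - 2 * u * (a * c) * (x * y) + (u * u) * (a * c) * c * y ^ 2) by ring.
    rewrite hac, hu. ring. }
  pose proof (sq 1) as p. pose proof (sq (-1)) as m.
  rewrite expand in p, m by ring.
  unfold Rabs; destruct Rcase_abs; lra.
Qed.

Lemma two_Re_mul_conj_le (a c : R) (z w : C) : 0 < a -> a * c = 1 ->
  2 * Rabs (Re (z * Cconj w)) <= a * Cmod z ^ 2 + c * Cmod w ^ 2.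
Proof.
  intros ha hac.
  eapply Rle_trans; [| apply (two_mul_le_weighted a c (Cmod z) (Cmod w) ha hac)].
  rewrite <- (Cmod_conj w), <- Cmod_mult, (Rabs_pos_eq (Cmod _)) by apply Cmod_ge_0.
  pose proof (re_le_Cmod (z * Cconj w)). lra.
Qed.

Section WeightedForm.
Variables (a b c : R) (z w : C).
Hypotheses (ha : 0 < a) (hac : a * c = 1).

Let S := a * Cmod z ^ 2 + c * Cmod w ^ 2.

Lemma cform_bounds : Rabs b <= 1 / 2 -> S / 2 <= cform a b c z w <= 3 * S / 2.
Proof.
  intros hb. pose proof (two_Re_mul_conj_le a c z w ha hac) as hRe.
  assert (cross : Rabs (2 * b * Re (z * Cconj w)) <= S / 2).
  { rewrite !Rabs_mult, (Rabs_pos_eq 2) by lra.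
    pose proof (Rabs_pos (Re (z * Cconj w))). unfold S. nra. }
  pose proof (Rle_abs (2 * b * Re (z * Cconj w))).
  pose proof (Rle_abs (- (2 * b * Re (z * Cconj w)))). rewrite Rabs_Ropp in *.
  unfold cform, S in *. lra.
Qed.

Lemma Rabs_cform_le (da db dc k1 k2 : R) :
  Rabs da <= k1 * a -> Rabs dc <= k1 * c -> Rabs db <= k2 ->
  Rabs (cform da db dc z w) <= (k1 + k2) * S.
Proof.
  intros hda hdc hdb. pose proof (two_Re_mul_conj_le a c z w ha hac) as hRe.
  pose proof (pow2_ge_0 (Cmod z)). pose proof (pow2_ge_0 (Cmod w)).
  unfold cform, S in *.
  eapply Rle_trans; [apply Rabs_triang |].
  eapply Rle_trans; [apply Rplus_le_compat_r, Rabs_triang |].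
  rewrite !Rabs_mult, (Rabs_pos_eq 2), !(Rabs_pos_eq (_ ^ 2)) by lra.
  pose proof (Rabs_pos (Re (z * Cconj w))). pose proof (Rabs_pos db). nra.
Qed.

Lemma sum_sq_comparison (L : R) : 1 <= a <= L ->
  Cmod z ^ 2 + Cmod w ^ 2 <= L * S /\ S <= L * (Cmod z ^ 2 + Cmod w ^ 2).
Proof.
  intros haL. unfold S.
  assert (hc : c = / a) by (apply (Rmult_eq_reg_l a); [rewrite hac; field |]; lra).
  assert (0 < c <= 1)
    by (rewrite hc; split; [apply Rinv_0_lt_compat | rewrite <- Rinv_1; apply Rinv_le_contravar]; lra).
  assert (1 <= L * c)
    by (rewrite hc; apply Rmult_le_reg_r with a; [lra | rewrite Rmult_assoc, Rinv_l; lra]).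
  pose proof (pow2_ge_0 (Cmod z)). pose proof (pow2_ge_0 (Cmod w)).
  set (X := Cmod z ^ 2) in *. set (Y := Cmod w ^ 2) in *.
  assert (X <= L * a * X) by (assert (1 <= L * a) by nra; nra).
  assert (Y <= L * c * Y) by nra.
  assert (a * X <= L * X) by nra.
  assert (c * Y <= L * Y) by nra.
  split; nra.
Qed.

End WeightedForm.

Lemma is_derive_Re (f : R -> C) (t : R) (l : C) :
  is_derive f t l -> is_derive (fun s => Re (f s)) t (Re l).
Proof.
  intros hf. eapply filterdiff_ext_lin.
  - apply (filterdiff_comp' f (fun z : C_R_NormedModule => fst z) t); [exact hf |].
    apply filterdiff_linear, is_linear_fst.
  - reflexivity.
Qed.

Lemma is_derive_Im (f : R -> C) (t : R) (l : C) :
  is_derive f t l -> is_derive (fun s => Im (f s)) t (Im l).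
Proof.
  intros hf. eapply filterdiff_ext_lin.
  - apply (filterdiff_comp' f (fun z : C_R_NormedModule => snd z) t); [exact hf |].
    apply filterdiff_linear, is_linear_snd.
  - reflexivity.
Qed.

Lemma is_derive_qform (a b c x y : R -> R) (da db dc h m p t : R) :
  is_derive a t da -> is_derive b t db -> is_derive c t dc ->
  is_derive x t (- h * x t - m * y t) -> is_derive y t (p * x t + h * y t) ->
  a t <> 0 -> a t * h = b t * p -> a t * m = c t * p ->
  is_derive (fun s => qform (a s) (b s) (c s) (x s) (y s)) t (qform da db dc (x t) (y t)).
Proof.
  intros ha hb hc hx hy ha0 hh hm.
  assert (h = b t * p / a t) by (field_simplify_eq; [lra | exact ha0]). subst h.
  assert (m = c t * p / a t) by (field_simplify_eq; [lra | exact ha0]). subst m.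
  unfold qform. auto_derive.
  - repeat split; eexists; eassumption.
  - rewrite (is_derive_unique (fun s : R => a s) t da ha),
      (is_derive_unique (fun s : R => b s) t db hb), (is_derive_unique (fun s : R => c s) t dc hc),
      (is_derive_unique (fun s : R => x s) t _ hx), (is_derive_unique (fun s : R => y s) t _ hy).
    field. exact ha0.
Qed.

Lemma Re_Im_system (h m p : R) (z w : C) :
  Re (- (RtoC h * z) - RtoC m * w)%C = - h * Re z - m * Re w /\
  Im (- (RtoC h * z) - RtoC m * w)%C = - h * Im z - m * Im w /\
  Re (RtoC p * z + RtoC h * w)%C = p * Re z + h * Re w /\
  Im (RtoC p * z + RtoC h * w)%C = p * Im z + h * Im w.
Proof. destruct z, w. simpl. repeat split; ring. Qed.

Lemma is_derive_cform (a b c : R -> R) (z w : R -> C) (da db dc h m p t : R) :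
  is_derive a t da -> is_derive b t db -> is_derive c t dc ->
  is_derive z t (- (RtoC h * z t) - RtoC m * w t)%C ->
  is_derive w t (RtoC p * z t + RtoC h * w t)%C ->
  a t <> 0 -> a t * h = b t * p -> a t * m = c t * p ->
  is_derive (fun s => cform (a s) (b s) (c s) (z s) (w s)) t (cform da db dc (z t) (w t)).
Proof.
  intros ha hb hc hz hw ha0 hh hm.
  apply (is_derive_ext (fun s => qform (a s) (b s) (c s) (Re (z s)) (Re (w s))
                                + qform (a s) (b s) (c s) (Im (z s)) (Im (w s))));
    [intros; symmetry; apply cform_qform |].
  rewrite cform_qform.
  pose proof (is_derive_Re z t _ hz) as hzr. pose proof (is_derive_Re w t _ hw) as hwr.
  pose proof (is_derive_Im z t _ hz) as hzi. pose proof (is_derive_Im w t _ hw) as hwi.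
  destruct (Re_Im_system h m p (z t) (w t)) as (e1 & e2 & e3 & e4).
  rewrite e1 in hzr. rewrite e2 in hzi. rewrite e3 in hwr. rewrite e4 in hwi.
  apply (is_derive_plus (K := R_AbsRing) (V := R_NormedModule));
    apply is_derive_qform with h m p; try assumption.
Qed.

Section HalfLine.
Variable a : R.

Definition right_cont (f : R -> R) : Prop := filterlim f (at_right a) (locally (f a)).

Lemma right_cont_plus (f g : R -> R) :
  right_cont f -> right_cont g -> right_cont (fun t => f t + g t).
Proof.
  intros hf hg. eapply filterlim_comp_2; [exact hf | exact hg |].
  apply (filterlim_plus (K := R_AbsRing) (V := R_NormedModule)).
Qed.

Lemma right_cont_mult (f g : R -> R) :
  right_cont f -> right_cont g -> right_cont (fun t => f t * g t).
Proof.
  intros hf hg. eapply filterlim_comp_2; [exact hf | exact hg |].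
  apply (filterlim_mult (K := R_AbsRing)).
Qed.

Lemma right_cont_of_ex_derive (f : R -> R) : ex_derive f a -> right_cont f.
Proof.
  intros hf. eapply filterlim_filter_le_1;
    [| exact (ex_derive_continuous (K := R_AbsRing) (V := R_NormedModule) f a hf)].
  intros P hP. unfold at_right, within. eapply filter_imp; [| exact hP]. auto.
Qed.

Lemma right_cont_const (c : R) : right_cont (fun _ => c).
Proof. apply right_cont_of_ex_derive, ex_derive_const. Qed.

Lemma right_cont_Re (z : R -> C) :
  filterlim z (at_right a) (locally (z a)) -> right_cont (fun t => Re (z t)).
Proof.
  intros hz. eapply filterlim_comp; [exact hz |].
  destruct (z a) as [u v]. exact (continuous_fst (U := R_UniformSpace) (V := R_UniformSpace) u v).
Qed.

Lemma right_cont_Im (z : R -> C) :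
  filterlim z (at_right a) (locally (z a)) -> right_cont (fun t => Im (z t)).
Proof.
  intros hz. eapply filterlim_comp; [exact hz |].
  destruct (z a) as [u v]. exact (continuous_snd (U := R_UniformSpace) (V := R_UniformSpace) u v).
Qed.

Lemma right_cont_qform (f g h x y : R -> R) :
  right_cont f -> right_cont g -> right_cont h -> right_cont x -> right_cont y ->
  right_cont (fun s => qform (f s) (g s) (h s) (x s) (y s)).
Proof.
  intros hf hg hh hx hy. pose proof right_cont_const.
  unfold qform. repeat apply right_cont_plus; repeat apply right_cont_mult; auto.
Qed.

Lemma right_cont_cform (f g h : R -> R) (z w : R -> C) :
  right_cont f -> right_cont g -> right_cont h ->
  filterlim z (at_right a) (locally (z a)) -> filterlim w (at_right a) (locally (w a)) ->
  right_cont (fun s => cform (f s) (g s) (h s) (z s) (w s)).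
Proof.
  intros hf hg hh hz hw. unfold right_cont. rewrite cform_qform.
  apply (filterlim_ext (fun s => qform (f s) (g s) (h s) (Re (z s)) (Re (w s))
                                + qform (f s) (g s) (h s) (Im (z s)) (Im (w s))));
    [intros; symmetry; apply cform_qform |].
  apply right_cont_plus; apply right_cont_qform; auto using right_cont_Re, right_cont_Im.
Qed.

Lemma le_of_derive_nonpos (f df : R -> R) (t : R) :
  right_cont f -> (forall s, a < s -> is_derive f s (df s)) ->
  (forall s, a < s -> df s <= 0) -> a <= t -> f t <= f a.
Proof.
  intros hf hd hneg [hat | <-]; [| lra].
  assert (mvt : forall y, a < y < t -> f t <= f y).
  { intros y hy.
    destruct (MVT_gen f y t df) as [c [hc hfc]].
    - intros x hx. apply hd. rewrite Rmin_left in hx; lra.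
    - intros x hx. rewrite Rmin_left, Rmax_right in hx by lra.
      apply continuity_pt_filterlim, (ex_derive_continuous (K := R_AbsRing) (V := R_NormedModule)).
      exists (df x). apply hd. lra.
    - rewrite Rmin_left, Rmax_right in hc by lra.
      assert (df c * (t - y) <= 0) by (apply Rmult_le_0_r; [apply hneg | ]; lra).
      lra. }
  change (Rbar_le (f t) (f a)).
  apply (filterlim_le (F := at_right a) (fun _ => f t) f); [| apply filterlim_const | exact hf].
  exists (mkposreal (t - a) ltac:(lra)). intros y hy hay. apply mvt. split; [exact hay |].
  change (Rabs (y - a) < t - a) in hy. apply Rabs_def2 in hy. lra.
Qed.

Lemma ge_of_derive_nonneg (f df : R -> R) (t : R) :
  right_cont f -> (forall s, a < s -> is_derive f s (df s)) ->
  (forall s, a < s -> 0 <= df s) -> a <= t -> f a <= f t.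
Proof.
  intros hf hd hpos hat. apply Ropp_le_cancel.
  apply (le_of_derive_nonpos (fun s => - f s) (fun s => - df s) t); [| | | exact hat].
  - eapply filterlim_comp; [exact hf | apply (filterlim_opp (K := R_AbsRing) (V := R_NormedModule))].
  - intros s hs. apply (is_derive_opp (K := R_AbsRing) (V := R_NormedModule)), hd, hs.
  - intros s hs. specialize (hpos s hs). lra.
Qed.

Lemma exp_weighted (E dE g dg : R -> R) (sg : R) :
  right_cont E -> (forall s, is_derive g s (dg s)) -> (forall s, a < s -> is_derive E s (dE s)) ->
  right_cont (fun s => E s * exp (sg * g s)) /\
  forall s, a < s -> is_derive (fun s => E s * exp (sg * g s)) s
                               (exp (sg * g s) * (dE s + sg * dg s * E s)).
Proof.
  intros hE hg hdE.
  assert (hw : forall s, is_derive (fun s => exp (sg * g s)) s (sg * dg s * exp (sg * g s))).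
  { intros s. apply (is_derive_comp exp (fun s => sg * g s));
      [apply is_derive_exp | apply is_derive_scal, hg]. }
  split.
  - apply right_cont_mult; [exact hE |]. apply right_cont_of_ex_derive. eexists. apply hw.
  - intros s hs.
    replace (exp (sg * g s) * (dE s + sg * dg s * E s))
      with (dE s * exp (sg * g s) + E s * (sg * dg s * exp (sg * g s))) by ring.
    apply (is_derive_mult E (fun s => exp (sg * g s))); [apply hdE, hs | apply hw | apply Rmult_comm].
Qed.

Lemma le_exp_sub_mul (x y u v : R) : x * exp u <= y * exp v -> x <= exp (v - u) * y.
Proof.
  intros hxy. apply (Rmult_le_compat_r (exp (- u))) in hxy; [| apply Rlt_le, exp_pos].
  rewrite !Rmult_assoc, <- !exp_plus, Rplus_opp_r, exp_0 in hxy.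
  replace (v + - u) with (v - u) in hxy by ring. lra.
Qed.

Lemma gronwall_two_sided (E dE g dg : R -> R) (t : R) :
  right_cont E -> (forall s, is_derive g s (dg s)) ->
  (forall s, a < s -> is_derive E s (dE s)) ->
  (forall s, a < s -> Rabs (dE s) <= dg s * E s) -> a <= t ->
  E t <= exp (g t - g a) * E a /\ E a <= exp (g t - g a) * E t.
Proof.
  intros hE hg hdE hbound hat. split.
  - destruct (exp_weighted E dE g dg (-1) hE hg hdE) as [hc hd].
    replace (g t - g a) with (-1 * g a - -1 * g t) by ring. apply le_exp_sub_mul.
    apply (le_of_derive_nonpos _ _ t hc hd); [| exact hat].
    intros s hs. specialize (hbound s hs). pose proof (Rle_abs (dE s)).
    pose proof (exp_pos (-1 * g s)). nra.
  - destruct (exp_weighted E dE g dg 1 hE hg hdE) as [hc hd].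
    replace (g t - g a) with (1 * g t - 1 * g a) by ring. apply le_exp_sub_mul.
    apply (ge_of_derive_nonneg _ _ t hc hd); [| exact hat].
    intros s hs. specialize (hbound s hs). pose proof (Rle_abs (- dE s)) as hneg.
    rewrite Rabs_Ropp in hneg. pose proof (exp_pos (1 * g s)). nra.
Qed.

End HalfLine.

Lemma exp_le_of_le (x y : R) : x <= y -> exp x <= exp y.
Proof.
  intros hxy. destruct (Rle_lt_or_eq_dec _ _ hxy) as [lt | ->];
    [apply Rlt_le, exp_increasing, lt | lra].
Qed.

Local Ltac solve_rational_derive :=
  auto_derive; [repeat split; repeat apply Rmult_integral_contrapositive_currified; lra | field; lra].

Section Coefficients.
Variables (e mm k xi : R).
Hypotheses (hm : 0 < mm) (hk : 1 <= k ^ 2).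

Lemma alpha_ge t : k ^ 2 <= alpha k xi t.
Proof. unfold alpha. pose proof (pow2_ge_0 (xi - k * t)). lra. Qed.

Lemma alpha_pos t : 0 < alpha k xi t.
Proof. pose proof (alpha_ge t). lra. Qed.

Lemma Rabs_dalpha_le t : Rabs (dalpha k xi t) <= alpha k xi t.
Proof.
  replace (dalpha k xi t) with (- (2 * k * (xi - k * t))) by (unfold dalpha; ring).
  unfold alpha. rewrite Rabs_Ropp, !Rabs_mult, (Rabs_pos_eq 2) by lra.
  rewrite <- (pow2_abs k), <- (pow2_abs (xi - k * t)).
  pose proof (pow2_ge_0 (Rabs k - Rabs (xi - k * t))). nra.
Qed.

Lemma shift_sq_le_alpha t : (xi - k * t) ^ 2 / alpha k xi t <= 1.
Proof.
  pose proof (alpha_pos t). apply Rmult_le_reg_r with (alpha k xi t); [lra |].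
  field_simplify; [unfold alpha; pose proof (pow2_ge_0 k); lra | lra].
Qed.

Definition k2_alpha t := k ^ 2 / alpha k xi t.

Lemma inv_alpha_bounds t : 0 < / alpha k xi t <= 1.
Proof.
  pose proof (alpha_ge t). split; [apply Rinv_0_lt_compat; lra |].
  rewrite <- Rinv_1. apply Rinv_le_contravar; lra.
Qed.

Lemma k2_alpha_bounds t : 0 < k2_alpha t <= 1.
Proof.
  unfold k2_alpha. pose proof (alpha_ge t).
  split; [apply Rdiv_lt_0_compat; lra |]. apply Rmult_le_reg_r with (alpha k xi t); [lra |].
  field_simplify; lra.
Qed.

Lemma coupling_ge0 : 0 <= 4 * PI * e ^ 2.
Proof. pose proof PI_RGT_0. pose proof (pow2_ge_0 e). nra. Qed.

Definition kappa := (4 * PI * e ^ 2 + 4 * mm) / 2.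

Lemma kappa_ge0 : 0 <= kappa.
Proof. unfold kappa. pose proof coupling_ge0. lra. Qed.

Definition ratio_bound := 1 + 4 * PI * e ^ 2 + 2 * mm.

Lemma one_le_ratio_bound : 1 <= ratio_bound.
Proof. unfold ratio_bound. pose proof coupling_ge0. lra. Qed.

Definition pm_ratio t := 1 + 4 * PI * e ^ 2 / alpha k xi t + 2 * k ^ 2 * mm / alpha k xi t ^ 2.

Definition mp_prod t := 4 * PI * e ^ 2 / mm + 2 * k ^ 2 / alpha k xi t + alpha k xi t / mm.

Lemma m2_pos t : 0 < m2 mm k xi t.
Proof.
  unfold m2. pose proof (alpha_pos t).
  apply Rmult_lt_0_compat; [apply Rinv_0_lt_compat |]; apply sqrt_lt_R0; lra.
Qed.

Lemma m2_sq t : m2 mm k xi t ^ 2 = alpha k xi t / mm.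
Proof.
  unfold m2. pose proof (alpha_pos t).
  rewrite Rpow_mult_distr, pow_inv, <- !Rsqr_pow2, !Rsqr_sqrt by lra. field. lra.
Qed.

Lemma p2_eq t : p2 e mm k xi t = m2 mm k xi t * pm_ratio t.
Proof.
  unfold p2, m2, pm_ratio. pose proof (alpha_pos t).
  pose proof (sqrt_sqrt mm) as hr. pose proof (sqrt_sqrt (alpha k xi t)) as hq.
  assert (0 < sqrt mm) by (apply sqrt_lt_R0; lra).
  assert (0 < sqrt (alpha k xi t)) by (apply sqrt_lt_R0; lra).
  set (r := sqrt mm) in *. set (q := sqrt (alpha k xi t)) in *.
  rewrite <- hr, <- hq by lra. field. lra.
Qed.

Lemma one_le_pm_ratio t : 1 <= pm_ratio t.
Proof.
  unfold pm_ratio. pose proof (alpha_pos t). pose proof PI_RGT_0. pose proof (pow2_ge_0 e).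
  assert (0 <= 4 * PI * e ^ 2 / alpha k xi t) by (apply Rdiv_le_0_compat; nra).
  assert (0 <= 2 * k ^ 2 * mm / alpha k xi t ^ 2) by (apply Rdiv_le_0_compat; nra).
  lra.
Qed.

Lemma pm_ratio_le t : pm_ratio t <= ratio_bound.
Proof.
  unfold pm_ratio, ratio_bound. pose proof (alpha_pos t). pose proof coupling_ge0.
  pose proof (inv_alpha_bounds t). pose proof (k2_alpha_bounds t). unfold k2_alpha in *.
  replace (4 * PI * e ^ 2 / alpha k xi t) with (4 * PI * e ^ 2 * / alpha k xi t) by reflexivity.
  replace (2 * k ^ 2 * mm / alpha k xi t ^ 2)
    with (2 * mm * (k ^ 2 / alpha k xi t) * / alpha k xi t) by (field; lra).
  set (v := / alpha k xi t) in *. set (q := k ^ 2 / alpha k xi t) in *.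
  assert (q * v <= 1) by nra. nra.
Qed.

Lemma p2_pos t : 0 < p2 e mm k xi t.
Proof.
  rewrite p2_eq. pose proof (m2_pos t). pose proof (one_le_pm_ratio t).
  apply Rmult_lt_0_compat; lra.
Qed.

Lemma p2_div_m2 t : p2 e mm k xi t / m2 mm k xi t = pm_ratio t.
Proof. rewrite p2_eq. pose proof (m2_pos t). field. lra. Qed.

Lemma m2_mul_p2 t : m2 mm k xi t * p2 e mm k xi t = mp_prod t.
Proof.
  rewrite p2_eq, <- Rmult_assoc.
  replace (m2 mm k xi t * m2 mm k xi t) with (m2 mm k xi t ^ 2) by ring.
  rewrite m2_sq. unfold pm_ratio, mp_prod. pose proof (alpha_pos t). field. lra.
Qed.

Lemma mp_prod_pos t : 0 < mp_prod t.
Proof. rewrite <- m2_mul_p2. apply Rmult_lt_0_compat; [apply m2_pos | apply p2_pos]. Qed.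

Lemma two_k2_alpha_le_mp_prod t : 2 * k2_alpha t <= mp_prod t.
Proof.
  unfold mp_prod, k2_alpha. pose proof coupling_ge0. pose proof (alpha_pos t).
  assert (0 <= 4 * PI * e ^ 2 / mm) by (apply Rdiv_le_0_compat; lra).
  assert (0 <= alpha k xi t / mm) by (apply Rdiv_le_0_compat; lra).
  unfold Rdiv in *. lra.
Qed.

Definition ea t := sqrt (p2 e mm k xi t / m2 mm k xi t).

Definition eb t := h2 k xi t / sqrt (m2 mm k xi t * p2 e mm k xi t).

Definition ec t := sqrt (m2 mm k xi t / p2 e mm k xi t).

Lemma ea_eq t : ea t = sqrt (pm_ratio t).
Proof. unfold ea. rewrite p2_div_m2. reflexivity. Qed.

Lemma one_le_ea t : 1 <= ea t.
Proof. unfold ea. rewrite p2_div_m2, <- sqrt_1. apply sqrt_le_1_alt, one_le_pm_ratio. Qed.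

Lemma ea_le t : ea t <= ratio_bound.
Proof.
  rewrite ea_eq. pose proof (one_le_pm_ratio t). pose proof (pm_ratio_le t).
  pose proof (sqrt_sqrt (pm_ratio t)). pose proof (sqrt_pos (pm_ratio t)).
  assert (1 <= sqrt (pm_ratio t)) by (rewrite <- sqrt_1; apply sqrt_le_1_alt; lra).
  nra.
Qed.

Lemma ec_eq_inv t : ec t = / ea t.
Proof.
  unfold ea, ec. rewrite <- sqrt_inv. pose proof (m2_pos t). pose proof (p2_pos t).
  f_equal. field. lra.
Qed.

Lemma sqrt_m2_mul_p2 t : sqrt (m2 mm k xi t * p2 e mm k xi t) = ea t * m2 mm k xi t.
Proof.
  unfold ea. pose proof (m2_pos t). pose proof (p2_pos t).
  replace (m2 mm k xi t * p2 e mm k xi t)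
    with (m2 mm k xi t ^ 2 * (p2 e mm k xi t / m2 mm k xi t)) by (field; lra).
  rewrite sqrt_mult_alt, sqrt_pow2 by (try apply pow2_ge_0; lra). ring.
Qed.

Lemma p2_eq_ea t : p2 e mm k xi t = ea t ^ 2 * m2 mm k xi t.
Proof.
  unfold ea. pose proof (m2_pos t). pose proof (p2_pos t).
  rewrite <- Rsqr_pow2, Rsqr_sqrt by (apply Rlt_le, Rdiv_lt_0_compat; lra). field. lra.
Qed.

Lemma ea_mul_h2 t : ea t * h2 k xi t = eb t * p2 e mm k xi t.
Proof.
  unfold eb. rewrite sqrt_m2_mul_p2, p2_eq_ea. pose proof (m2_pos t). pose proof (one_le_ea t).
  field. lra.
Qed.

Lemma ea_mul_m2 t : ea t * m2 mm k xi t = ec t * p2 e mm k xi t.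
Proof. rewrite ec_eq_inv, p2_eq_ea. pose proof (one_le_ea t). field. lra. Qed.

Definition dpm_ratio t :=
  - (4 * PI * e ^ 2 / alpha k xi t ^ 2 + 4 * k ^ 2 * mm / alpha k xi t ^ 3) * dalpha k xi t.

Definition dmp_prod t := (- 2 * k ^ 2 / alpha k xi t ^ 2 + / mm) * dalpha k xi t.

Definition dh2 t := k ^ 2 * (k ^ 2 - (xi - k * t) ^ 2) / (2 * alpha k xi t ^ 2).

Lemma is_derive_pm_ratio t : is_derive pm_ratio t (dpm_ratio t).
Proof.
  pose proof (alpha_pos t). unfold pm_ratio, dpm_ratio, dalpha, alpha in *.
  solve_rational_derive.
Qed.

Lemma is_derive_mp_prod t : is_derive mp_prod t (dmp_prod t).
Proof.
  pose proof (alpha_pos t). unfold mp_prod, dmp_prod, dalpha, alpha in *.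
  solve_rational_derive.
Qed.

Lemma is_derive_h2 t : is_derive (h2 k xi) t (dh2 t).
Proof.
  pose proof (alpha_pos t). unfold h2, dh2, dalpha, alpha in *.
  solve_rational_derive.
Qed.

Definition dea t := dpm_ratio t / (2 * ea t).

Definition dec t := - dea t / ea t ^ 2.

Definition deb t := (dh2 t - h2 k xi t * dmp_prod t / (2 * mp_prod t)) / sqrt (mp_prod t).

Lemma is_derive_ea t : is_derive ea t (dea t).
Proof.
  apply (is_derive_ext (fun s => sqrt (pm_ratio s))); [intros; symmetry; apply ea_eq |].
  unfold dea. rewrite ea_eq. apply is_derive_sqrt; [apply is_derive_pm_ratio | ].
  pose proof (one_le_pm_ratio t). lra.
Qed.

Lemma is_derive_ec t : is_derive ec t (dec t).
Proof.
  apply (is_derive_ext (fun s => / ea s)); [intros; symmetry; apply ec_eq_inv |].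
  apply is_derive_inv; [apply is_derive_ea |]. pose proof (one_le_ea t). lra.
Qed.

Lemma is_derive_eb t : is_derive eb t (deb t).
Proof.
  apply (is_derive_ext (fun s => h2 k xi s / sqrt (mp_prod s))).
  { intros s. unfold eb. rewrite m2_mul_p2. reflexivity. }
  pose proof (mp_prod_pos t) as hP. pose proof (sqrt_lt_R0 _ hP) as hsP.
  pose proof (sqrt_sqrt _ (Rlt_le _ _ hP)) as hsq.
  replace (deb t) with ((dh2 t * sqrt (mp_prod t) - h2 k xi t * (dmp_prod t / (2 * sqrt (mp_prod t))))
                         / sqrt (mp_prod t) ^ 2).
  - apply (is_derive_div (h2 k xi) (fun s => sqrt (mp_prod s)));
      [apply is_derive_h2 | apply is_derive_sqrt; [apply is_derive_mp_prod | lra] | lra].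
  - unfold deb. set (P := mp_prod t) in *. set (r := sqrt P) in *. rewrite <- hsq. field. lra.
Qed.

Lemma Rabs_dpm_ratio_le t : Rabs (dpm_ratio t) <= 2 * kappa * k2_alpha t.
Proof.
  unfold dpm_ratio, kappa. pose proof (alpha_pos t). pose proof coupling_ge0.
  pose proof (inv_alpha_bounds t). pose proof (k2_alpha_bounds t).
  pose proof (Rabs_dalpha_le t). unfold k2_alpha in *.
  replace (4 * PI * e ^ 2 / alpha k xi t ^ 2 + 4 * k ^ 2 * mm / alpha k xi t ^ 3)
    with ((4 * PI * e ^ 2 + 4 * mm * (k ^ 2 / alpha k xi t)) * / alpha k xi t * / alpha k xi t)
    by (field; lra).
  assert (halpha : Rabs (dalpha k xi t) * / alpha k xi t <= 1)
    by (apply Rmult_le_reg_r with (alpha k xi t); [lra | field_simplify; lra]).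
  assert (hv : / alpha k xi t <= k ^ 2 / alpha k xi t)
    by (unfold Rdiv; rewrite <- (Rmult_1_l (/ alpha k xi t)) at 1; apply Rmult_le_compat_r; lra).
  set (v := / alpha k xi t) in *. set (q := k ^ 2 / alpha k xi t) in *.
  set (c := 4 * PI * e ^ 2) in *. set (d := Rabs (dalpha k xi t)) in *.
  assert (hW : 0 <= (c + 4 * mm * q) * v) by (apply Rmult_le_pos; nra).
  rewrite Rabs_mult, Rabs_Ropp, Rabs_pos_eq by (apply Rmult_le_pos; lra). fold d.
  assert ((c + 4 * mm * q) * v * v * d <= (c + 4 * mm * q) * v)
    by (rewrite Rmult_assoc; rewrite <- (Rmult_1_r ((c + 4 * mm * q) * v)) at 2;
        apply Rmult_le_compat_l; lra).
  assert (c * v <= c * q) by (apply Rmult_le_compat_l; lra).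
  assert (mm * q * v <= mm * q) by (rewrite <- (Rmult_1_r (mm * q)) at 2; apply Rmult_le_compat_l; nra).
  lra.
Qed.

Lemma Rabs_dea_le t : Rabs (dea t) <= kappa * k2_alpha t * ea t.
Proof.
  unfold dea. pose proof (one_le_ea t) as h1. pose proof (Rabs_dpm_ratio_le t).
  pose proof kappa_ge0. pose proof (k2_alpha_bounds t).
  unfold Rdiv. rewrite Rabs_mult, (Rabs_pos_eq (/ _)) by (apply Rlt_le, Rinv_0_lt_compat; lra).
  apply Rmult_le_reg_r with (2 * ea t); [lra |].
  rewrite Rmult_assoc, Rinv_l by lra.
  assert (0 <= kappa * k2_alpha t) by (apply Rmult_le_pos; lra).
  assert (2 <= ea t * (2 * ea t)) by nra. nra.
Qed.

Lemma Rabs_dec_le t : Rabs (dec t) <= kappa * k2_alpha t * ec t.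
Proof.
  pose proof (one_le_ea t). pose proof (Rabs_dea_le t).
  replace (dec t) with (- (dea t / ea t) * ec t) by (unfold dec; rewrite ec_eq_inv; field; lra).
  rewrite ec_eq_inv, Rabs_mult, Rabs_Ropp, (Rabs_pos_eq (/ _)) by (apply Rlt_le, Rinv_0_lt_compat; lra).
  apply Rmult_le_compat_r; [apply Rlt_le, Rinv_0_lt_compat; lra |].
  unfold Rdiv. rewrite Rabs_mult, (Rabs_pos_eq (/ _)) by (apply Rlt_le, Rinv_0_lt_compat; lra).
  apply Rmult_le_reg_r with (ea t); [lra |]. rewrite Rmult_assoc, Rinv_l by lra. lra.
Qed.

Lemma Rabs_eb_le t : Rabs (eb t) <= 1 / 2.
Proof.
  pose proof (mp_prod_pos t) as hP. pose proof (sqrt_lt_R0 _ hP) as hsP.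
  pose proof (alpha_pos t). pose proof (shift_sq_le_alpha t). pose proof (k2_alpha_bounds t).
  pose proof (two_k2_alpha_le_mp_prod t).
  assert (hh : h2 k xi t ^ 2 = k2_alpha t * ((xi - k * t) ^ 2 / alpha k xi t) / 4)
    by (unfold h2, dalpha, k2_alpha; field; lra).
  assert (habs : Rabs (h2 k xi t) <= Rabs (sqrt (mp_prod t) / 2)).
  { apply Rsqr_le_abs_0. rewrite !Rsqr_pow2, hh.
    replace ((sqrt (mp_prod t) / 2) ^ 2) with (mp_prod t / 4)
      by (rewrite <- Rsqr_pow2, Rsqr_div', Rsqr_sqrt by lra; unfold Rsqr; field).
    nra. }
  rewrite (Rabs_pos_eq (_ / 2)) in habs by lra.
  unfold eb. rewrite m2_mul_p2. unfold Rdiv at 1.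
  rewrite Rabs_mult, (Rabs_pos_eq (/ _)) by (apply Rlt_le, Rinv_0_lt_compat; lra).
  apply Rmult_le_reg_r with (sqrt (mp_prod t)); [lra |].
  rewrite Rmult_assoc, Rinv_l by lra. lra.
Qed.

Lemma Rabs_dh2_le t : Rabs (dh2 t) <= k2_alpha t / 2.
Proof.
  pose proof (alpha_pos t). pose proof (k2_alpha_bounds t).
  assert (hs : Rabs (k ^ 2 - (xi - k * t) ^ 2) <= alpha k xi t)
    by (unfold alpha; pose proof (pow2_ge_0 k); pose proof (pow2_ge_0 (xi - k * t));
        apply Rabs_le; lra).
  replace (dh2 t) with (k2_alpha t * (k ^ 2 - (xi - k * t) ^ 2) * / alpha k xi t / 2)
    by (unfold dh2, k2_alpha; field; lra).
  pose proof (inv_alpha_bounds t).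
  assert (Rabs (k ^ 2 - (xi - k * t) ^ 2) * / alpha k xi t <= 1)
    by (apply Rmult_le_reg_r with (alpha k xi t); [lra | rewrite Rmult_assoc, Rinv_l; lra]).
  unfold Rdiv. rewrite !Rabs_mult, (Rabs_pos_eq (k2_alpha t)), (Rabs_pos_eq (/ alpha _ _ _)),
    (Rabs_pos_eq (/ 2)) by lra.
  pose proof (Rabs_pos (k ^ 2 - (xi - k * t) ^ 2)). nra.
Qed.

Lemma Rabs_h2_dmp_prod_le t : Rabs (h2 k xi t * dmp_prod t) <= k2_alpha t * mp_prod t.
Proof.
  pose proof (alpha_pos t). pose proof (k2_alpha_bounds t). pose proof (shift_sq_le_alpha t).
  pose proof coupling_ge0.
  replace (h2 k xi t * dmp_prod t) with
    (k2_alpha t * ((xi - k * t) ^ 2 / mm - 2 * k2_alpha t * ((xi - k * t) ^ 2 / alpha k xi t)))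
    by (unfold h2, dmp_prod, dalpha, k2_alpha; field; lra).
  rewrite Rabs_mult, Rabs_pos_eq by lra. apply Rmult_le_compat_l; [lra |].
  assert (0 <= (xi - k * t) ^ 2 / mm) by (apply Rdiv_le_0_compat; [apply pow2_ge_0 | lra]).
  assert (0 <= (xi - k * t) ^ 2 / alpha k xi t) by (apply Rdiv_le_0_compat; [apply pow2_ge_0 | lra]).
  assert ((xi - k * t) ^ 2 / mm <= alpha k xi t / mm)
    by (apply Rmult_le_compat_r; [apply Rlt_le, Rinv_0_lt_compat; lra |
        unfold alpha; pose proof (pow2_ge_0 k); lra]).
  assert (0 <= 4 * PI * e ^ 2 / mm) by (apply Rdiv_le_0_compat; lra).
  assert (k2_alpha t * ((xi - k * t) ^ 2 / alpha k xi t) <= k2_alpha t)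
    by (rewrite <- (Rmult_1_r (k2_alpha t)) at 2; apply Rmult_le_compat_l; lra).
  assert (0 <= k2_alpha t * ((xi - k * t) ^ 2 / alpha k xi t)) by (apply Rmult_le_pos; lra).
  replace (mp_prod t) with (4 * PI * e ^ 2 / mm + 2 * k2_alpha t + alpha k xi t / mm)
    by (unfold mp_prod, k2_alpha; field; lra).
  apply Rabs_le. lra.
Qed.

Lemma inv_sqrt_mp_prod_le t : / sqrt (mp_prod t) <= sqrt mm.
Proof.
  pose proof (mp_prod_pos t). pose proof (alpha_ge t). pose proof coupling_ge0.
  rewrite <- (Rinv_inv (sqrt mm)).
  apply Rinv_le_contravar; [apply Rinv_0_lt_compat, sqrt_lt_R0; lra |].
  rewrite <- sqrt_inv. apply sqrt_le_1_alt.
  unfold mp_prod.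
  assert (/ mm <= alpha k xi t / mm)
    by (rewrite <- (Rmult_1_l (/ mm)) at 1; apply Rmult_le_compat_r; [apply Rlt_le, Rinv_0_lt_compat |]; lra).
  assert (0 <= 4 * PI * e ^ 2 / mm) by (apply Rdiv_le_0_compat; lra).
  assert (0 <= 2 * k ^ 2 / alpha k xi t) by (apply Rdiv_le_0_compat; nra).
  lra.
Qed.

Lemma Rabs_deb_le t : Rabs (deb t) <= sqrt mm * k2_alpha t.
Proof.
  pose proof (mp_prod_pos t) as hP. pose proof (sqrt_lt_R0 _ hP).
  pose proof (Rabs_dh2_le t). pose proof (Rabs_h2_dmp_prod_le t). pose proof (inv_sqrt_mp_prod_le t).
  pose proof (k2_alpha_bounds t).
  assert (hnum : Rabs (dh2 t - h2 k xi t * dmp_prod t / (2 * mp_prod t)) <= k2_alpha t).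
  { eapply Rle_trans; [apply Rabs_triang |]. rewrite Rabs_Ropp.
    unfold Rdiv. rewrite Rabs_mult, (Rabs_pos_eq (/ _)) by (apply Rlt_le, Rinv_0_lt_compat; lra).
    assert (Rabs (h2 k xi t * dmp_prod t) * / (2 * mp_prod t) <= k2_alpha t / 2)
      by (apply Rmult_le_reg_r with (2 * mp_prod t); [lra | rewrite Rmult_assoc, Rinv_l by lra; lra]).
    lra. }
  unfold deb, Rdiv. rewrite Rabs_mult, (Rabs_pos_eq (/ _)) by (apply Rlt_le, Rinv_0_lt_compat; lra).
  rewrite Rmult_comm.
  apply Rmult_le_compat; [apply Rlt_le, Rinv_0_lt_compat; lra | apply Rabs_pos | lra | lra].
Qed.

End Coefficients.

Lemma is_derive_atan_shift (k xi t : R) : k <> 0 ->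
  is_derive (fun s => atan (s - xi / k)) t (k2_alpha k xi t).
Proof.
  intros hk0. unfold k2_alpha, alpha.
  assert (0 < k ^ 2 + (xi - k * t) ^ 2) by (pose proof (pow2_ge_0 (xi - k * t)); nra).
  auto_derive; [exact I |].
  replace (1 + (t - xi / k) * (t - xi / k)) with ((k ^ 2 + (xi - k * t) ^ 2) / k ^ 2)
    by (field; exact hk0).
  field. split; [lra | exact hk0].
Qed.

Lemma atan_sub_le (u v : R) : atan u - atan v <= PI.
Proof. pose proof (atan_bound u). pose proof (atan_bound v). lra. Qed.

Definition energy_rate (e mm : R) := 2 * (kappa e mm + sqrt mm).

Lemma energy_rate_ge0 (e mm : R) : 0 < mm -> 0 <= energy_rate e mm.
Proof.
  intros hm. unfold energy_rate. pose proof (kappa_ge0 e mm hm). pose proof (sqrt_pos mm). lra.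
Qed.

Section Solution.
Variables (e mm k xi : R) (B1 B2 : R -> C).
Hypotheses (hm : 0 < mm) (hk : 1 <= k ^ 2) (sol : is_solution e mm k xi B1 B2).

Local Notation E := (Eminus e mm k xi B1 B2).
Local Notation D := (energy_rate e mm).
Local Notation L := (ratio_bound e mm).

Lemma Eminus_cform t : E t = cform (ea e mm k xi t) (eb e mm k xi t) (ec e mm k xi t) (B1 t) (B2 t).
Proof. reflexivity. Qed.

Lemma is_derive_Eminus t : 0 < t ->
  is_derive E t (cform (dea e mm k xi t) (deb e mm k xi t) (dec e mm k xi t) (B1 t) (B2 t)).
Proof.
  intros ht. destruct (proj2 sol t ht) as [d1 d2].
  pose proof (one_le_ea e mm k xi hm hk t).
  apply (is_derive_cform (ea e mm k xi) (eb e mm k xi) (ec e mm k xi) B1 B2 _ _ _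
           (h2 k xi t) (m2 mm k xi t) (p2 e mm k xi t));
    [apply is_derive_ea | apply is_derive_eb | apply is_derive_ec | exact d1 | exact d2 | lra
    | apply ea_mul_h2 | apply ea_mul_m2]; assumption.
Qed.

Lemma right_cont_Eminus : right_cont 0 E.
Proof.
  destruct (proj1 sol 0 (Rle_refl 0)) as [c1 c2].
  apply (right_cont_cform 0); [| | | exact c1 | exact c2];
    apply right_cont_of_ex_derive; eexists;
    [apply is_derive_ea | apply is_derive_eb | apply is_derive_ec]; assumption.
Qed.

Lemma Eminus_comparable t :
  let S := ea e mm k xi t * Cmod (B1 t) ^ 2 + ec e mm k xi t * Cmod (B2 t) ^ 2 in
  (S / 2 <= E t <= 3 * S / 2) /\ normB B1 B2 t ^ 2 <= L * S /\ S <= L * normB B1 B2 t ^ 2.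
Proof.
  pose proof (one_le_ea e mm k xi hm hk t). pose proof (ea_le e mm k xi hm hk t).
  assert (hac : ea e mm k xi t * ec e mm k xi t = 1)
    by (rewrite ec_eq_inv by assumption; field; lra).
  split.
  - rewrite Eminus_cform. apply cform_bounds; [lra | exact hac | apply Rabs_eb_le; assumption].
  - unfold normB. rewrite pow2_sqrt
      by (pose proof (pow2_ge_0 (Cmod (B1 t))); pose proof (pow2_ge_0 (Cmod (B2 t))); lra).
    apply sum_sq_comparison; [lra | exact hac | split; assumption].
Qed.

Lemma Eminus_nonneg t : 0 <= E t.
Proof.
  destruct (Eminus_comparable t) as [[hS _] [hN _]].
  pose proof (pow2_ge_0 (normB B1 B2 t)). pose proof (one_le_ratio_bound e mm hm). nra.
Qed.

Lemma Rabs_derive_Eminus_le t :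
  Rabs (cform (dea e mm k xi t) (deb e mm k xi t) (dec e mm k xi t) (B1 t) (B2 t))
  <= D * k2_alpha k xi t * E t.
Proof.
  pose proof (one_le_ea e mm k xi hm hk t). destruct (Eminus_comparable t) as [[hE _] _].
  pose proof (kappa_ge0 e mm hm). pose proof (k2_alpha_bounds k xi hk t). pose proof (sqrt_pos mm).
  eapply Rle_trans.
  - apply (Rabs_cform_le (ea e mm k xi t) (ec e mm k xi t));
      [lra | rewrite ec_eq_inv by assumption; field; lra
      | apply Rabs_dea_le | apply Rabs_dec_le | apply Rabs_deb_le]; assumption.
  - unfold energy_rate.
    assert (0 <= kappa e mm * k2_alpha k xi t + sqrt mm * k2_alpha k xi t) by nra.
    nra.
Qed.

Lemma Eminus_exp_bounds t : 0 <= t -> E t <= exp (D * PI) * E 0 /\ E 0 <= exp (D * PI) * E t.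
Proof.
  intros ht. assert (hk0 : k <> 0) by (intros ->; lra).
  destruct (gronwall_two_sided 0 E
              (fun s => cform (dea e mm k xi s) (deb e mm k xi s) (dec e mm k xi s) (B1 s) (B2 s))
              (fun s => D * atan (s - xi / k)) (fun s => D * k2_alpha k xi s) t) as [up lo].
  - exact right_cont_Eminus.
  - intros s. apply is_derive_scal, is_derive_atan_shift, hk0.
  - intros s hs. apply is_derive_Eminus, hs.
  - intros s _. apply Rabs_derive_Eminus_le.
  - exact ht.
  - assert (hexp : exp (D * atan (t - xi / k) - D * atan (0 - xi / k)) <= exp (D * PI)).
    { apply exp_le_of_le. rewrite <- Rmult_minus_distr_l.
      apply Rmult_le_compat_l; [apply energy_rate_ge0; lra | apply atan_sub_le]. }
    split; (eapply Rle_trans; [eassumption | apply Rmult_le_compat_r; [apply Eminus_nonneg | exact hexp]]).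
Qed.

Lemma normB_le_of_Eminus_le (c u v : R) : 0 <= c -> E u <= c * E v ->
  normB B1 B2 u <= sqrt (3 * L ^ 2 * c) * normB B1 B2 v.
Proof.
  intros hc huv. pose proof (one_le_ratio_bound e mm hm).
  destruct (Eminus_comparable u) as [[hEu _] [hNu _]].
  destruct (Eminus_comparable v) as [[_ hEv] [_ hSv]].
  set (Su := ea e mm k xi u * Cmod (B1 u) ^ 2 + ec e mm k xi u * Cmod (B2 u) ^ 2) in *.
  set (Sv := ea e mm k xi v * Cmod (B1 v) ^ 2 + ec e mm k xi v * Cmod (B2 v) ^ 2) in *.
  assert (L * Su <= L * (2 * E u)) by (apply Rmult_le_compat_l; lra).
  assert (E u <= c * (3 * Sv / 2)) by (eapply Rle_trans; [exact huv | apply Rmult_le_compat_l; lra]).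
  assert (L * (2 * E u) <= L * (2 * (c * (3 * Sv / 2)))) by (apply Rmult_le_compat_l; lra).
  assert (3 * L * c * Sv <= 3 * L * c * (L * normB B1 B2 v ^ 2))
    by (apply Rmult_le_compat_l; [apply Rmult_le_pos |]; lra).
  assert (hsq : normB B1 B2 u ^ 2 <= 3 * L ^ 2 * c * normB B1 B2 v ^ 2) by lra.
  rewrite <- (sqrt_pow2 (normB B1 B2 u)), <- (sqrt_pow2 (normB B1 B2 v)) by apply sqrt_pos.
  rewrite <- sqrt_mult by nra. apply sqrt_le_1_alt. exact hsq.
Qed.

End Solution.

Lemma one_le_IZR_sq (k : Z) : k <> 0%Z -> 1 <= IZR k ^ 2.
Proof.
  intros hk. destruct (Z_lt_le_dec k 0) as [hneg | hpos].
  - assert (IZR k <= -1) by (apply IZR_le; lia). nra.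
  - assert (1 <= IZR k) by (apply IZR_le; lia). nra.
Qed.

Theorem lemma4p1 (e mm : R) (he : 0 < e) (hm : 0 < mm) :
  exists C1 C1' C2 C2' : R,
    0 < C1 /\ C1 <= C1' /\ 0 < C2 /\ C2 <= C2' /\
    forall (k : Z) (xi : R) (B1 B2 : R -> C),
      k <> 0%Z ->
      is_solution e mm (IZR k) xi B1 B2 ->
      forall t, 0 <= t ->
        C1 * Eminus e mm (IZR k) xi B1 B2 0 <= Eminus e mm (IZR k) xi B1 B2 t /\
        Eminus e mm (IZR k) xi B1 B2 t <= C1' * Eminus e mm (IZR k) xi B1 B2 0 /\
        C2 * normB B1 B2 0 <= normB B1 B2 t /\
        normB B1 B2 t <= C2' * normB B1 B2 0.
Proof.
  set (C := exp (energy_rate e mm * PI)).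
  set (N := sqrt (3 * ratio_bound e mm ^ 2 * C)).
  assert (hC : 1 <= C).
  { unfold C. rewrite <- exp_0. apply exp_le_of_le, Rmult_le_pos;
      [apply energy_rate_ge0; lra | pose proof PI_RGT_0; lra]. }
  assert (hN : 1 <= N).
  { pose proof (one_le_ratio_bound e mm hm).
    unfold N. rewrite <- sqrt_1. apply sqrt_le_1_alt. nra. }
  exists (/ C), C, (/ N), N. refine (conj _ (conj _ (conj _ (conj _ _)))).
  - apply Rinv_0_lt_compat. lra.
  - apply Rle_trans with 1; [rewrite <- Rinv_1; apply Rinv_le_contravar |]; lra.
  - apply Rinv_0_lt_compat. lra.
  - apply Rle_trans with 1; [rewrite <- Rinv_1; apply Rinv_le_contravar |]; lra.
  - intros k xi B1 B2 hk sol t ht.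
    pose proof (one_le_IZR_sq k hk) as hk2.
    destruct (Eminus_exp_bounds e mm (IZR k) xi B1 B2 hm hk2 sol t ht) as [up lo].
    fold C in up, lo.
    pose proof (normB_le_of_Eminus_le e mm (IZR k) xi B1 B2 hm hk2 C t 0 ltac:(lra) up) as nt.
    pose proof (normB_le_of_Eminus_le e mm (IZR k) xi B1 B2 hm hk2 C 0 t ltac:(lra) lo) as n0.
    fold N in nt, n0. refine (conj _ (conj _ (conj _ _))).
    + apply Rmult_le_reg_l with C; [lra |]. rewrite <- Rmult_assoc, Rinv_r, Rmult_1_l; lra.
    + exact up.
    + apply Rmult_le_reg_l with N; [lra |]. rewrite <- Rmult_assoc, Rinv_r, Rmult_1_l; lra.
    + assumption.
Qed.
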